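(* Let $\mathcal T$ be a finite set of time steps and $X^{(t')}\in\mathbb{R}_{\ge0}^{m\times n}$ for $t'\in\mathcal T$, and let $\bar X=\sum_{t'\in\mathcal T}X^{(t')}$. For any $t\in\mathcal T$, let $p^{(t)}=X^{(t)}\mathbf 1_n$ and $q^{(t)}=(X^{(t)})^T\mathbf 1_m$. Then IPF (with zero-marginal handling) on $(\bar X,p^{(t)},q^{(t)})$ converges, i.e. the sequence of scaled matrices $\mathrm{diag}(d^0)\bar X\mathrm{diag}(d^1)$ converges to a matrix with row sums $p^{(t)}$ and column sums $q^{(t)}$.
   Context: IPF with zero-marginal handling on $(X,p,q)$, $X\in\mathbb{R}_{\ge0}^{m\times n}$, $p\in\mathbb{R}_{\ge0}^m$, $q\in\mathbb{R}_{\ge0}^n$, $\sum_ip_i=\sum_jq_j$: start with $d^0=\mathbf 1_m$, $d^1=\mathbf 1_n$; alternately update rows (for each $i$: $d^0_i\leftarrow0$ if $p_i=0$, else $d^0_i\leftarrow p_i/\sum_jX_{ij}d^1_j$) and columns (for each $j$: $d^1_j\leftarrow0$ if $q_j=0$, else $d^1_j\leftarrow q_j/\sum_iX_{ij}d^0_i$); after each update the scaled matrix is $\mathrm{diag}(d^0)X\mathrm{diag}(d^1)$. *)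

From HB Require Import structures.
From mathcomp Require Import all_boot all_order all_algebra.
From mathcomp Require Import all_classical all_reals all_analysis.
Set Implicit Arguments. Unset Strict Implicit. Unset Printing Implicit Defensive.
Import Order.TTheory GRing.Theory Num.Theory.
Local Open Scope ring_scope.

Section IPF.
Variables (R : realType) (m n : nat).

Definition ipf_row (X : 'M[R]_(m, n)) (p : 'I_m -> R) (d1 : 'I_n -> R) : 'I_m -> R :=
  fun i => if p i == 0 then 0 else p i / (\sum_(j < n) X i j * d1 j).

Definition ipf_col (X : 'M[R]_(m, n)) (q : 'I_n -> R) (d0 : 'I_m -> R) : 'I_n -> R :=
  fun j => if q j == 0 then 0 else q j / (\sum_(i < m) X i j * d0 i).

(* Scaling vectors after k updates: k = 0 is the initial state (1, 1);
   updates alternate, starting with a row update. *)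
Fixpoint ipf_scalings (X : 'M[R]_(m, n)) (p : 'I_m -> R) (q : 'I_n -> R) (k : nat)
  : ('I_m -> R) * ('I_n -> R) :=
  match k with
  | 0%N => (fun _ => 1, fun _ => 1)
  | k'.+1 =>
      let: (d0, d1) := ipf_scalings X p q k' in
      if odd k' then (d0, ipf_col X q d0)
      else (ipf_row X p d1, d1)
  end.

Definition ipf_matrix (X : 'M[R]_(m, n)) (p : 'I_m -> R) (q : 'I_n -> R) (k : nat)
  : 'M[R]_(m, n) :=
  let: (d0, d1) := ipf_scalings X p q k in
  \matrix_(i, j) (d0 i * X i j * d1 j).

End IPF.

From HB Require Import structures.
From mathcomp Require Import all_boot all_order all_algebra.
From mathcomp Require Import all_classical all_reals all_analysis.
From mathcomp Require Import ring lra.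
Import Order.TTheory GRing.Theory Num.Theory numFieldNormedType.Exports.
Set Implicit Arguments. Unset Strict Implicit. Unset Printing Implicit Defensive.
Local Open Scope ring_scope.
Local Open Scope classical_set_scope.

(* Write [Y] for [X^(t)] and [B] for [Xbar]: then [0 <= Y <= B] entrywise, so
   [Y] is feasible (nonnegative, with margins [p], [q], and zero wherever [B]
   is).  IPF is an alternating I-projection: for every feasible [Z], each
   update lowers the Kullback-Leibler divergence [KL(Z | M_k)] by exactly the
   divergence between the prescribed and the current margins (the gain).  With
   [Z = Y] the divergences decrease and stay nonnegative, so the gains tend to
   0, and by the Pinsker-type bound [(u_i - v_i)^2 <= 4 N KL(u | v)] the margins
   of [M_k] tend to [p] and [q].  The iterates are bounded, hence have a cluster
   point [L], which is feasible by continuity.  With [Z = L], [KL(L | M_k)] is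
   nonincreasing and approaches [KL(L | L) = 0] along the cluster point, so it
   tends to 0 and Pinsker again gives [M_k --> L]. *)

Section KullbackLeibler.
Variable R : realType.

Lemma ln_le_subr1 (x : R) : 0 < x -> ln x <= x - 1.
Proof.
move=> x0; have := @le_ln1Dx R (x - 1).
by rewrite addrCA subrr addr0; apply; lra.
Qed.

Lemma ler_sum_term (I : finType) (F : I -> R) (i0 : I) :
  (forall i, 0 <= F i) -> F i0 <= \sum_i F i.
Proof.
move=> F0; rewrite (bigD1 i0) //= lerDl; apply: sumr_ge0 => i _; exact: F0.
Qed.

Definition kl (I : finType) (u v : I -> R) : R :=
  \sum_i u i * (ln (u i) - ln (v i)).

Lemma hellinger_term_le (u v : R) : 0 <= u -> 0 <= v -> (0 < u -> 0 < v) ->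
  (Num.sqrt u - Num.sqrt v) ^+ 2 <= u * (ln u - ln v) - u + v.
Proof.
move=> u0 v0 uv.
have [->|u_neq0] := eqVneq u 0.
  by rewrite sqrtr0 sub0r sqrrN sqr_sqrtr // mul0r subr0 add0r.
have u_gt0 : 0 < u by rewrite lt_neqAle eq_sym u_neq0.
set a := Num.sqrt u; set b := Num.sqrt v.
have a_gt0 : 0 < a by rewrite sqrtr_gt0.
have b_gt0 : 0 < b by rewrite sqrtr_gt0 uv.
rewrite -(sqr_sqrtr u0) -(sqr_sqrtr v0) -/a -/b !lnXn //.
have : a * (ln b - ln a) <= b - a.
  have -> : b - a = a * (b / a - 1) by field; rewrite gt_eqF.
  rewrite ler_pM2l // -ln_div ?posrE //; exact/ln_le_subr1/divr_gt0.
rewrite !mulr2n; nra.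
Qed.

Section Pinsker.
Variables (I : finType) (u v : I -> R) (N : R).
Hypotheses (u_ge0 : forall i, 0 <= u i) (v_ge0 : forall i, 0 <= v i).
Hypothesis supp_u_v : forall i, 0 < u i -> 0 < v i.
Hypotheses (sum_u : \sum_i u i = N) (sum_v : \sum_i v i = N).

Let klE : kl u v = \sum_i (u i * (ln (u i) - ln (v i)) - u i + v i).
Proof. by rewrite big_split /= sumrB sum_u sum_v /kl; lra. Qed.

Let term_ge0 i : 0 <= u i * (ln (u i) - ln (v i)) - u i + v i.
Proof.
exact: le_trans (sqr_ge0 _) (hellinger_term_le (u_ge0 i) (v_ge0 i) (@supp_u_v i)).
Qed.

Lemma kl_ge0 : 0 <= kl u v.
Proof. by rewrite klE; apply: sumr_ge0 => i _. Qed.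

Lemma sqr_sub_le_kl i : (u i - v i) ^+ 2 <= 4 * N * kl u v.
Proof.
have hs : (Num.sqrt (u i) - Num.sqrt (v i)) ^+ 2 <= kl u v.
  rewrite klE; apply: le_trans (hellinger_term_le (u_ge0 i) (v_ge0 i) (@supp_u_v i)) _.
  exact: ler_sum_term i term_ge0.
have uN : u i <= N by rewrite -sum_u; exact: ler_sum_term.
have vN : v i <= N by rewrite -sum_v; exact: ler_sum_term.
have ua : u i = Num.sqrt (u i) ^+ 2 by rewrite sqr_sqrtr.
have vb : v i = Num.sqrt (v i) ^+ 2 by rewrite sqr_sqrtr.
rewrite ua vb in uN vN *; have := sqrtr_ge0 (u i); have := sqrtr_ge0 (v i).
set a := Num.sqrt (u i) in hs uN *; set b := Num.sqrt (v i) in hs vN * => b0 a0.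
have -> : (a ^+ 2 - b ^+ 2) ^+ 2 = (a - b) ^+ 2 * (a + b) ^+ 2 by ring.
rewrite [4 * N * _]mulrC; apply: ler_pM; [exact: sqr_ge0|exact: sqr_ge0|exact: hs|nra].
Qed.

End Pinsker.
End KullbackLeibler.

Section Limits.
Variable R : realType.

Lemma continuous_vec_mx m n : continuous (vec_mx : 'rV[R]_(m * n) -> 'M[R]_(m, n)).
Proof.
move=> u A /nbhs_ballP[e /= e0 eA].
apply/nbhs_ballP; exists e => //= v [_ uv]; apply: eA; split => // i j.
by rewrite !mxE; exact: uv.
Qed.

Lemma cvg_mx_entries m n (v : nat -> 'M[R]_(m, n)) (L : 'M[R]_(m, n)) :
  (forall i j, (fun k => v k i j) @ \oo --> L i j) -> v @ \oo --> L.
Proof.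
move=> cv; apply/cvg_ballP => e e0.
have : \forall k \near \oo, forall ij : 'I_m * 'I_n, ball (L ij.1 ij.2) e (v k ij.1 ij.2).
  by apply: filter_forall => -[i j]; exact: (cvg_ballP _ _).1 (cv i j) e e0.
by apply: filterS => k vk; split => // i j; exact: (vk (i, j)).
Qed.

Lemma cluster_bounded_mx m n (v : nat -> 'M[R]_(m, n)) (C : R) :
  (forall k i j, `|v k i j| <= C) -> exists L, cluster (v @ \oo) L.
Proof.
move=> vC; pose box := [set x : 'rV[R]_(m * n) | forall i, `[- C, C] (x ord0 i)].
have box_compact : compact box.
  by apply: (@rV_compact _ _ (fun=> `[- C, C])) => _; exact: segment_compact.
have [|w [_ cw]] := box_compact ((mxvec \o v) @ \oo) _.
  exists 0%N => // k _ i /=; rewrite in_itv /= -ler_norml.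
  by case/mxvec_indexP: i => i j; rewrite mxvecE.
exists (vec_mx w) => A B vA LB.
have vA' : ((mxvec \o v) @ \oo) (mxvec @` A).
  by case: vA => N _ vA; exists N => // k /vA Ak; exists (v k).
have wB : nbhs w (vec_mx @^-1` B) by exact: continuous_vec_mx.
have [_ [[M AM <-] BM]] := cw _ _ vA' wB.
by exists M; split=> //; rewrite -[M]mxvecK.
Qed.

Lemma cluster_closed (T : topologicalType) (F : set_system T) (A : set T) (w : T) :
  closed A -> F A -> cluster F w -> A w.
Proof. by move=> /closure_id A_closed FA; rewrite clusterE A_closed => /(_ A FA). Qed.

Lemma closed_entry_ge0 m n i j : closed [set M : 'M[R]_(m, n) | 0 <= M i j].
Proof.
have -> : [set M : 'M[R]_(m, n) | 0 <= M i j] = (fun M => M i j) @^-1` [set x | 0 <= x].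
  by [].
apply: preimage_closed; last exact: closed_ge.
by move=> M _; exact: coord_continuous.
Qed.

Lemma cluster_cvg_eq (T : topologicalType) (v : nat -> T) (w : T) (g : T -> R)
    (l : R) :
  cluster (v @ \oo) w -> {for w, continuous g} ->
  (fun k => g (v k)) @ \oo --> l -> g w = l.
Proof.
move=> vw gw /cvg_cluster gvl; apply/esym/norm_hausdorff/gvl => A C gvA Cgw.
have [x [Ax Cx]] := vw (g @^-1` A) _ gvA (gw _ Cgw).
by exists (g x).
Qed.

Lemma cvg_sqr_dist_le (u v : R^nat) (l c : R) :
  (forall k, (l - u k) ^+ 2 <= c * v k) -> v @ \oo --> 0 -> u @ \oo --> l.
Proof.
move=> uv v0; pose s k := Num.sqrt (c * v k).
have s0 : s @ \oo --> 0.
  rewrite -sqrtr0 -(mulr0 c); apply: continuous_cvg; first exact: sqrt_continuous.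
  by apply: cvgM => //; exact: cvg_cst.
apply: (squeeze_cvgr (f := fun k => l - s k) (h := fun k => l + s k)).
- by apply: nearW => k; rewrite -ler_distlC -sqrtr_sqr; exact: ler_wsqrtr.
- by rewrite -[X in _ --> X]subr0; apply: cvgB => //; exact: cvg_cst.
- by rewrite -[X in _ --> X]addr0; apply: cvgD => //; exact: cvg_cst.
Qed.

Lemma nonincreasing_sub_succ_cvg0 (u : R^nat) :
  nonincreasing_seq u -> has_lbound (range u) -> (fun k => u k - u k.+1) @ \oo --> 0.
Proof.
move=> u_ni u_lb; have u_cvg := nonincreasing_cvgn u_ni u_lb.
rewrite -(subrr (inf (u @` setT))); apply: cvgB => //.
by rewrite cvg_shiftS.
Qed.
End Limits.

Section MatrixScaling.
Variables (R : realType) (m n : nat).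
Implicit Types (M Z : 'M[R]_(m, n)).

Definition row_sum M i := \sum_(j < n) M i j.
Definition col_sum M j := \sum_(i < m) M i j.
Definition row_scale (u : 'I_m -> R) M := \matrix_(i, j) (u i / row_sum M i * M i j).
Definition col_scale (w : 'I_n -> R) M := \matrix_(i, j) (w j / col_sum M j * M i j).

Definition mx_kl Z M := \sum_(i < m) \sum_(j < n) Z i j * (ln (Z i j) - ln (M i j)).

Lemma mx_klE Z M :
  mx_kl Z M = kl (fun x : 'I_m * 'I_n => Z x.1 x.2) (fun x => M x.1 x.2).
Proof. by rewrite /mx_kl /kl pair_bigA. Qed.

Lemma mx_kl_self Z : mx_kl Z Z = 0.
Proof. by rewrite /mx_kl big1 // => i _; rewrite big1 // => j _; rewrite subrr mulr0. Qed.

Lemma continuous_mx_kl_self Z :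
  (forall i j, 0 <= Z i j) -> {for Z, continuous (mx_kl Z)}.
Proof.
move=> Z_ge0; apply: (cvg_big add_continuous (nbhs_filter Z)) => i _.
apply: (cvg_big add_continuous (nbhs_filter Z)) => j _.
have [->|Z_neq0] := eqVneq (Z i j) 0.
  by rewrite mul0r; under eq_cvg do rewrite mul0r; exact: cvg_cst.
have Z_gt0 : 0 < Z i j by rewrite lt_neqAle eq_sym Z_neq0 Z_ge0.
apply: cvgM; first exact: cvg_cst.
apply: cvgB; first exact: cvg_cst.
exact: (continuous_comp (@coord_continuous R m n i j Z) (continuous_ln Z_gt0)).
Qed.

Lemma sum_entries M : \sum_(x : 'I_m * 'I_n) M x.1 x.2 = \sum_i row_sum M i.
Proof. by rewrite -pair_bigA. Qed.

Lemma sum_row_sum M : \sum_i row_sum M i = \sum_j col_sum M j.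
Proof. exact: exchange_big. Qed.

Lemma continuous_row_sum i : continuous (fun M => row_sum M i).
Proof.
apply: continuous_big => [|j _];
  [exact: add_continuous|exact: (@coord_continuous R m n i j)].
Qed.

Lemma continuous_col_sum j : continuous (fun M => col_sum M j).
Proof.
apply: continuous_big => [|i _];
  [exact: add_continuous|exact: (@coord_continuous R m n i j)].
Qed.

Lemma row_sum_row_scale u M i :
  (row_sum M i = 0 -> u i = 0) -> row_sum (row_scale u M) i = u i.
Proof.
move=> Mu; rewrite {1}/row_sum; under eq_bigr do rewrite mxE.
rewrite -mulr_sumr -/(row_sum M i).
by have [/Mu ->|M_neq0] := eqVneq (row_sum M i) 0; rewrite ?mul0r // divfK.
Qed.

Lemma col_sum_col_scale w M j :
  (col_sum M j = 0 -> w j = 0) -> col_sum (col_scale w M) j = w j.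
Proof.
move=> Mw; rewrite {1}/col_sum; under eq_bigr do rewrite mxE.
rewrite -mulr_sumr -/(col_sum M j).
by have [/Mw ->|M_neq0] := eqVneq (col_sum M j) 0; rewrite ?mul0r // divfK.
Qed.

Section KlScale.
Variables Z M : 'M[R]_(m, n).
Hypotheses (Z_ge0 : forall i j, 0 <= Z i j) (M_ge0 : forall i j, 0 <= M i j).
Hypothesis supp_Z_M : forall i j, 0 < Z i j -> 0 < M i j.

(* Rescaling a row or a column of [M] changes every [ln (M i j)] of that line
   by the same constant, and [Z] weighs the line by its marginal. *)
Let kl_scale_term i j (a b : R) : (0 < Z i j -> 0 < a /\ 0 < b) ->
  Z i j * (ln (Z i j) - ln (M i j)) - Z i j * (ln (Z i j) - ln (a / b * M i j)) =
  Z i j * (ln a - ln b).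
Proof.
move=> Zab; have [->|Z_neq0] := eqVneq (Z i j) 0; first by rewrite !mul0r subrr.
have Z_gt0 : 0 < Z i j by rewrite lt_neqAle eq_sym Z_neq0 Z_ge0.
have [a_gt0 b_gt0] := Zab Z_gt0; have M_gt0 := supp_Z_M Z_gt0.
rewrite lnM ?posrE ?divr_gt0 // ln_div ?posrE //; ring.
Qed.

Lemma mx_kl_row_scale u : (forall i, row_sum Z i = u i) ->
  mx_kl Z M - mx_kl Z (row_scale u M) = kl u (row_sum M).
Proof.
move=> Zu; rewrite /mx_kl /kl -sumrB; apply: eq_bigr => i _.
rewrite -sumrB -{1}Zu /row_sum mulr_suml; apply: eq_bigr => j _.
rewrite mxE; apply: kl_scale_term => Z_gt0; split.
- by rewrite -Zu; exact: lt_le_trans Z_gt0 (ler_sum_term j (Z_ge0 i)).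
- exact: lt_le_trans (supp_Z_M Z_gt0) (ler_sum_term j (M_ge0 i)).
Qed.

Lemma mx_kl_col_scale w : (forall j, col_sum Z j = w j) ->
  mx_kl Z M - mx_kl Z (col_scale w M) = kl w (col_sum M).
Proof.
move=> Zw; rewrite /mx_kl exchange_big [X in _ - X]exchange_big /kl -sumrB.
apply: eq_bigr => j _.
rewrite -sumrB -{1}Zw /col_sum mulr_suml; apply: eq_bigr => i _.
rewrite mxE; apply: kl_scale_term => Z_gt0; split.
- by rewrite -Zw; exact: lt_le_trans Z_gt0 (ler_sum_term i (Z_ge0^~ j)).
- exact: lt_le_trans (supp_Z_M Z_gt0) (ler_sum_term i (M_ge0^~ j)).
Qed.

End KlScale.
End MatrixScaling.

Section IPF.
Variables (R : realType) (m n : nat) (B Y : 'M[R]_(m, n)).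
Hypotheses (Y_ge0 : forall i j, 0 <= Y i j) (Y_le_B : forall i j, Y i j <= B i j).

Let p := row_sum Y.
Let q := col_sum Y.
Let N := \sum_i p i.

Let B_ge0 i j : 0 <= B i j. Proof. exact: le_trans (Y_ge0 i j) (Y_le_B i j). Qed.
Let p_ge0 i : 0 <= p i. Proof. exact: sumr_ge0. Qed.
Let q_ge0 j : 0 <= q j. Proof. exact: sumr_ge0. Qed.
Let sum_q : \sum_j q j = N. Proof. by rewrite /N sum_row_sum. Qed.

Let p_gt0_witness i : 0 < p i -> exists2 j, 0 < Y i j & 0 < q j.
Proof.
move=> p_gt0; have p_neq0 : p i <> 0 by apply/eqP; rewrite gt_eqF.
have [j /andP[_ Y_gt0]] := psumr_neq0P (fun j _ => Y_ge0 i j) p_neq0.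
by exists j => //; exact: lt_le_trans Y_gt0 (ler_sum_term i (Y_ge0^~ j)).
Qed.

Let q_gt0_witness j : 0 < q j -> exists2 i, 0 < Y i j & 0 < p i.
Proof.
move=> q_gt0; have q_neq0 : q j <> 0 by apply/eqP; rewrite gt_eqF.
have [i /andP[_ Y_gt0]] := psumr_neq0P (fun i _ => Y_ge0 i j) q_neq0.
by exists i => //; exact: lt_le_trans Y_gt0 (ler_sum_term j (Y_ge0 i)).
Qed.

Definition positive_scaling (d : ('I_m -> R) * ('I_n -> R)) :=
  [/\ forall i, 0 <= d.1 i, forall j, 0 <= d.2 j,
      forall i, 0 < p i -> 0 < d.1 i & forall j, 0 < q j -> 0 < d.2 j].

Let row_den_gt0 (d1 : 'I_n -> R) i : (forall j, 0 <= d1 j) ->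
  (forall j, 0 < q j -> 0 < d1 j) -> 0 < p i -> 0 < \sum_j B i j * d1 j.
Proof.
move=> d1_ge0 d1_gt0 /p_gt0_witness[j Y_gt0 q_gt0].
apply: lt_le_trans (ler_sum_term j (fun j => mulr_ge0 (B_ge0 i j) (d1_ge0 j))).
exact: mulr_gt0 (lt_le_trans Y_gt0 (Y_le_B i j)) (d1_gt0 j q_gt0).
Qed.

Let col_den_gt0 (d0 : 'I_m -> R) j : (forall i, 0 <= d0 i) ->
  (forall i, 0 < p i -> 0 < d0 i) -> 0 < q j -> 0 < \sum_i B i j * d0 i.
Proof.
move=> d0_ge0 d0_gt0 /q_gt0_witness[i Y_gt0 p_gt0].
apply: lt_le_trans (ler_sum_term i (fun i => mulr_ge0 (B_ge0 i j) (d0_ge0 i))).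
exact: mulr_gt0 (lt_le_trans Y_gt0 (Y_le_B i j)) (d0_gt0 i p_gt0).
Qed.

Lemma ipf_scalings_positive k : positive_scaling (ipf_scalings B p q k).
Proof.
elim: k => [|k]; first by split=> /= *; rewrite ?ler01 ?ltr01.
rewrite /=; case: ipf_scalings => d0 d1 [/= d0_ge0 d1_ge0 d0_gt0 d1_gt0].
case: (odd k).
  split=> //= [j|j q_gt0]; rewrite /ipf_col; last first.
    by rewrite gt_eqF //; apply/divr_gt0/col_den_gt0.
  by case: ifP => // _; apply/divr_ge0/sumr_ge0 => // i _; exact: mulr_ge0.
split=> //= [i|i p_gt0]; rewrite /ipf_row; last first.
  by rewrite gt_eqF //; apply/divr_gt0/row_den_gt0.
by case: ifP => // _; apply/divr_ge0/sumr_ge0 => // j _; exact: mulr_ge0.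
Qed.

Definition ipfM k := ipf_matrix B p q k.

Lemma ipfM_E k i j :
  ipfM k i j = (ipf_scalings B p q k).1 i * B i j * (ipf_scalings B p q k).2 j.
Proof. by rewrite /ipfM /ipf_matrix; case: ipf_scalings => d0 d1; rewrite mxE. Qed.

Lemma ipfM_ge0 k i j : 0 <= ipfM k i j.
Proof.
have [d0_ge0 d1_ge0 _ _] := ipf_scalings_positive k.
by rewrite ipfM_E; apply/mulr_ge0/d1_ge0/mulr_ge0.
Qed.

Lemma ipfM_gt0 k i j : 0 < B i j -> 0 < p i -> 0 < q j -> 0 < ipfM k i j.
Proof.
have [_ _ d0_gt0 d1_gt0] := ipf_scalings_positive k => B_gt0 p_gt0 q_gt0.
by rewrite ipfM_E; apply/mulr_gt0/d1_gt0/q_gt0/mulr_gt0/B_gt0/d0_gt0.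
Qed.

Lemma ipfM_eq0 k i j : B i j = 0 -> ipfM k i j = 0.
Proof. by move=> B0; rewrite ipfM_E B0 mulr0 mul0r. Qed.

Lemma ipfM_succ k :
  ipfM k.+1 = if odd k then col_scale q (ipfM k) else row_scale p (ipfM k).
Proof.
rewrite /ipfM /ipf_matrix /=; have := ipf_scalings_positive k.
case: ipf_scalings => d0 d1 [/= d0_ge0 d1_ge0 d0_gt0 d1_gt0].
case: (odd k); apply/matrixP => i j; rewrite !mxE /=.
  rewrite /col_sum; under eq_bigr do rewrite mxE.
  have -> : \sum_i d0 i * B i j * d1 j = (\sum_i B i j * d0 i) * d1 j.
    by rewrite mulr_suml; apply: eq_bigr => i' _; ring.
  rewrite /ipf_col; have [->|q_neq0] := eqVneq (q j) 0; first by rewrite !mul0r mulr0.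
  have q_gt0 : 0 < q j by rewrite lt_neqAle eq_sym q_neq0 q_ge0.
  have d1j_gt0 := d1_gt0 j q_gt0; have den_gt0 := col_den_gt0 d0_ge0 d0_gt0 q_gt0.
  by field; rewrite !gt_eqF.
rewrite /row_sum; under eq_bigr do rewrite mxE.
have -> : \sum_j d0 i * B i j * d1 j = d0 i * \sum_j B i j * d1 j.
  by rewrite mulr_sumr; apply: eq_bigr => j' _; ring.
rewrite /ipf_row; have [->|p_neq0] := eqVneq (p i) 0; first by rewrite !mul0r.
have p_gt0 : 0 < p i by rewrite lt_neqAle eq_sym p_neq0 p_ge0.
have d0i_gt0 := d0_gt0 i p_gt0; have den_gt0 := row_den_gt0 d1_ge0 d1_gt0 p_gt0.
by field; rewrite !gt_eqF.
Qed.

Lemma row_sum_ipfM_gt0 k i : 0 < p i -> 0 < row_sum (ipfM k) i.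
Proof.
move=> /[dup] p_gt0 /p_gt0_witness[j Y_gt0 q_gt0].
apply: lt_le_trans (ler_sum_term j (ipfM_ge0 k i)).
exact: ipfM_gt0 (lt_le_trans Y_gt0 (Y_le_B i j)) p_gt0 q_gt0.
Qed.

Lemma col_sum_ipfM_gt0 k j : 0 < q j -> 0 < col_sum (ipfM k) j.
Proof.
move=> /[dup] q_gt0 /q_gt0_witness[i Y_gt0 p_gt0].
apply: lt_le_trans (ler_sum_term i (ipfM_ge0 k ^~ j)).
exact: ipfM_gt0 (lt_le_trans Y_gt0 (Y_le_B i j)) p_gt0 q_gt0.
Qed.

Lemma row_sum_ipfM_even k : ~~ odd k -> row_sum (ipfM k.+1) =1 p.
Proof.
move=> /negbTE k_even i; rewrite ipfM_succ k_even row_sum_row_scale // => M0.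
apply/eqP; rewrite eq_le p_ge0 andbT leNgt.
by apply/negP => /(row_sum_ipfM_gt0 k); rewrite M0 ltxx.
Qed.

Lemma col_sum_ipfM_odd k : odd k -> col_sum (ipfM k.+1) =1 q.
Proof.
move=> k_odd j; rewrite ipfM_succ k_odd col_sum_col_scale // => M0.
apply/eqP; rewrite eq_le q_ge0 andbT leNgt.
by apply/negP => /(col_sum_ipfM_gt0 k); rewrite M0 ltxx.
Qed.

(* Only the iterates from [k = 1] on carry the mass [N]; [ipfM 0 = B] need not. *)
Lemma sum_row_sum_ipfM k : \sum_i row_sum (ipfM k.+1) i = N.
Proof.
have [k_odd|k_even] := boolP (odd k).
  by rewrite sum_row_sum -sum_q; apply: eq_bigr => j _; rewrite col_sum_ipfM_odd.
by apply: eq_bigr => i _; rewrite row_sum_ipfM_even.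
Qed.

Lemma sum_col_sum_ipfM k : \sum_j col_sum (ipfM k.+1) j = N.
Proof. by rewrite -sum_row_sum sum_row_sum_ipfM. Qed.

Definition ipf_feasible (Z : 'M[R]_(m, n)) :=
  [/\ forall i j, 0 <= Z i j, row_sum Z =1 p, col_sum Z =1 q
     & forall i j, B i j = 0 -> Z i j = 0].

Lemma ipf_feasibleY : ipf_feasible Y.
Proof.
split=> // i j B0; apply/eqP; rewrite eq_le Y_ge0 andbT -B0; exact: Y_le_B.
Qed.

Lemma ipf_feasible_supp Z k i j : ipf_feasible Z -> 0 < Z i j -> 0 < ipfM k i j.
Proof.
case=> Z_ge0 Zp Zq ZB Z_gt0; apply: ipfM_gt0.
- rewrite lt_neqAle B_ge0 andbT; apply: contraTneq Z_gt0 => /esym/ZB ->.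
  by rewrite ltxx.
- by rewrite -Zp; exact: lt_le_trans Z_gt0 (ler_sum_term j (Z_ge0 i)).
- by rewrite -Zq; exact: lt_le_trans Z_gt0 (ler_sum_term i (Z_ge0^~ j)).
Qed.

Definition ipf_gain k :=
  if odd k then kl q (col_sum (ipfM k)) else kl p (row_sum (ipfM k)).

Lemma mx_kl_ipfM_succ Z k : ipf_feasible Z ->
  mx_kl Z (ipfM k) - mx_kl Z (ipfM k.+1) = ipf_gain k.
Proof.
move=> fZ; have [Z_ge0 Zp Zq _] := fZ.
have Z_supp i j : 0 < Z i j -> 0 < ipfM k i j by exact: ipf_feasible_supp.
rewrite ipfM_succ /ipf_gain; case: odd.
- exact: mx_kl_col_scale Z_ge0 (ipfM_ge0 k) Z_supp _ Zq.
- exact: mx_kl_row_scale Z_ge0 (ipfM_ge0 k) Z_supp _ Zp.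
Qed.

Let row_sum_ipfM_ge0 k i : 0 <= row_sum (ipfM k) i.
Proof. by apply: sumr_ge0 => j _; exact: ipfM_ge0. Qed.

Let col_sum_ipfM_ge0 k j : 0 <= col_sum (ipfM k) j.
Proof. by apply: sumr_ge0 => i _; exact: ipfM_ge0. Qed.

Lemma ipf_gain_ge0 k : 0 <= ipf_gain k.+1.
Proof.
rewrite /ipf_gain /=; case: odd => /=.
- exact: kl_ge0 p_ge0 (row_sum_ipfM_ge0 _) (row_sum_ipfM_gt0 k.+1) _
    (sum_row_sum_ipfM k).
- exact: kl_ge0 q_ge0 (col_sum_ipfM_ge0 _) (col_sum_ipfM_gt0 k.+1) sum_q
    (sum_col_sum_ipfM k).
Qed.

Let N_ge0 : 0 <= N. Proof. exact: sumr_ge0. Qed.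

Lemma sqr_row_defect_le k i :
  (p i - row_sum (ipfM k.+1) i) ^+ 2 <= 4 * N * ipf_gain k.+1.
Proof.
have [k_odd|k_even] := boolP (odd k).
  rewrite /ipf_gain /= k_odd /=.
  exact: sqr_sub_le_kl p_ge0 (row_sum_ipfM_ge0 _) (row_sum_ipfM_gt0 k.+1) _
    (sum_row_sum_ipfM k) i.
rewrite row_sum_ipfM_even // subrr expr0n /=.
by apply: mulr_ge0 (ipf_gain_ge0 k); rewrite mulr_ge0.
Qed.

Lemma sqr_col_defect_le k j :
  (q j - col_sum (ipfM k.+1) j) ^+ 2 <= 4 * N * ipf_gain k.+1.
Proof.
have [k_odd|k_even] := boolP (odd k).
  rewrite col_sum_ipfM_odd // subrr expr0n /=.
  by apply: mulr_ge0 (ipf_gain_ge0 k); rewrite mulr_ge0.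
rewrite /ipf_gain /= (negbTE k_even) /=.
exact: sqr_sub_le_kl q_ge0 (col_sum_ipfM_ge0 _) (col_sum_ipfM_gt0 k.+1) sum_q
  (sum_col_sum_ipfM k) j.
Qed.

Section FeasibleKl.
Variable Z : 'M[R]_(m, n).
Hypothesis feasZ : ipf_feasible Z.

Let Z_ge0 i j : 0 <= Z i j. Proof. by case: feasZ. Qed.
Let sum_Z : \sum_(x : 'I_m * 'I_n) Z x.1 x.2 = N.
Proof. by case: feasZ => _ Zp _ _; rewrite sum_entries; apply: eq_bigr => i _. Qed.
Let sum_ipfM k : \sum_(x : 'I_m * 'I_n) ipfM k.+1 x.1 x.2 = N.
Proof. by rewrite sum_entries sum_row_sum_ipfM. Qed.
Let supp_Z k (x : 'I_m * 'I_n) : 0 < Z x.1 x.2 -> 0 < ipfM k x.1 x.2.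
Proof. exact: ipf_feasible_supp. Qed.

Lemma mx_kl_ipfM_ge0 k : 0 <= mx_kl Z (ipfM k.+1).
Proof.
rewrite mx_klE; apply: kl_ge0 (supp_Z k.+1) sum_Z (sum_ipfM k) => x.
- exact: Z_ge0.
- exact: ipfM_ge0.
Qed.

Lemma sqr_sub_le_mx_kl k i j :
  (Z i j - ipfM k.+1 i j) ^+ 2 <= 4 * N * mx_kl Z (ipfM k.+1).
Proof.
rewrite mx_klE.
apply: (sqr_sub_le_kl _ _ (supp_Z k.+1) sum_Z (sum_ipfM k) (i, j)) => x.
- exact: Z_ge0.
- exact: ipfM_ge0.
Qed.

Lemma mx_kl_ipfM_nonincreasing : nonincreasing_seq (fun k => mx_kl Z (ipfM k.+1)).
Proof.
apply/nonincreasing_seqP => k; have := mx_kl_ipfM_succ k.+1 feasZ.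
have := ipf_gain_ge0 k; lra.
Qed.

Lemma mx_kl_ipfM_lbound : has_lbound (range (fun k => mx_kl Z (ipfM k.+1))).
Proof. by exists 0 => _ [k _ <-]; exact: mx_kl_ipfM_ge0. Qed.

End FeasibleKl.

Lemma ipf_gain_cvg0 : (fun k => ipf_gain k.+1) @ \oo --> 0.
Proof.
have -> : (fun k => ipf_gain k.+1) =
    fun k => mx_kl Y (ipfM k.+1) - mx_kl Y (ipfM k.+2).
  by apply/funext => k; rewrite mx_kl_ipfM_succ //; exact: ipf_feasibleY.
exact: nonincreasing_sub_succ_cvg0 (mx_kl_ipfM_nonincreasing ipf_feasibleY)
  (mx_kl_ipfM_lbound ipf_feasibleY).
Qed.

Lemma row_sum_ipfM_cvg i : (fun k => row_sum (ipfM k.+1) i) @ \oo --> p i.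
Proof. exact: cvg_sqr_dist_le (sqr_row_defect_le ^~ i) ipf_gain_cvg0. Qed.

Lemma col_sum_ipfM_cvg j : (fun k => col_sum (ipfM k.+1) j) @ \oo --> q j.
Proof. exact: cvg_sqr_dist_le (sqr_col_defect_le ^~ j) ipf_gain_cvg0. Qed.

Lemma ipfM_le_mass k i j : ipfM k.+1 i j <= N.
Proof.
rewrite -(sum_row_sum_ipfM k).
apply: le_trans (ler_sum_term i (row_sum_ipfM_ge0 k.+1)).
exact: ler_sum_term j (ipfM_ge0 k.+1 i).
Qed.

Lemma cluster_ipf_feasible L :
  cluster ((fun k => ipfM k.+1) @ \oo) L -> ipf_feasible L.
Proof.
move=> cL; split.
- move=> i j; apply: cluster_closed (closed_entry_ge0 (i := i) (j := j)) _ cL.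
  by exists 0%N => // k _; exact: ipfM_ge0.
- move=> i; apply: (cluster_cvg_eq cL (@continuous_row_sum R m n i L)).
  exact: row_sum_ipfM_cvg.
- move=> j; apply: (cluster_cvg_eq cL (@continuous_col_sum R m n j L)).
  exact: col_sum_ipfM_cvg.
- move=> i j B0; apply: (cluster_cvg_eq cL (@coord_continuous R m n i j L)).
  by under eq_cvg do rewrite ipfM_eq0 //; exact: cvg_cst.
Qed.

Theorem ipf_converges : exists L : 'M[R]_(m, n),
  ipfM @ \oo --> L /\ row_sum L =1 p /\ col_sum L =1 q.
Proof.
have [L cL] : exists L, cluster ((fun k => ipfM k.+1) @ \oo) L.
  apply: (@cluster_bounded_mx _ _ _ _ N) => k i j.
  by rewrite ger0_norm ?ipfM_ge0 ?ipfM_le_mass.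
have feasL := cluster_ipf_feasible cL; have [L_ge0 _ _ _] := feasL.
have kl_cvg0 : (fun k => mx_kl L (ipfM k.+1)) @ \oo --> 0.
  have kl_cvg := nonincreasing_cvgn (mx_kl_ipfM_nonincreasing feasL)
    (mx_kl_ipfM_lbound feasL).
  have kl_lim := cluster_cvg_eq cL (continuous_mx_kl_self L_ge0) kl_cvg.
  by rewrite -kl_lim mx_kl_self in kl_cvg.
exists L; split; last by case: feasL.
rewrite -cvg_shiftS; apply: cvg_mx_entries => i j.
exact: cvg_sqr_dist_le (fun k => sqr_sub_le_mx_kl feasL k i j) kl_cvg0.
Qed.

End IPF.

Local Close Scope classical_set_scope.

Theorem mainTheorem6 (R : realType) (m n : nat) (T : finType)
  (X : T -> 'M[R]_(m, n)) (hX : forall t i j, 0 <= X t i j) (t : T) :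
  let Xbar := \sum_(t' : T) X t' in
  let p := fun i : 'I_m => \sum_(j < n) X t i j in
  let q := fun j : 'I_n => \sum_(i < m) X t i j in
  exists L : 'M[R]_(m, n),
    (ipf_matrix Xbar p q @ \oo --> L)%classic /\
    (forall i, \sum_(j < n) L i j = p i) /\
    (forall j, \sum_(i < m) L i j = q j).
Proof.
move=> Xbar p q.
have X_le_Xbar i j : X t i j <= Xbar i j.
  by rewrite summxE; exact: ler_sum_term t (fun t' => hX t' i j).
exact: ipf_converges (hX t) X_le_Xbar.
Qed.
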